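(* Let $F\colon\mathbf{PBoolean}^{\mathrm{op}}\to\mathbf{Loc}$ be any functor whose restriction to boolean algebras is naturally isomorphic to the Stone spectrum functor $B\mapsto\mathrm{Idl}(B)$. Then $F(\mathrm{Proj}(M_n(\mathbb{C})))$ is the trivial locale for every $n\ge 3$.
   Context: A partial boolean algebra is a set $A$ with a reflexive symmetric relation $\odot$ (commeasurability), elements $0,1$ commeasurable with everything, a total unary operation $\neg$, and binary operations $\wedge,\vee$ defined on commeasurable pairs, such that every set of pairwise commeasurable elements is contained in a set of pairwise commeasurable elements which is closed under the operations and forms a boolean algebra under them. $\mathbf{PBoolean}$ is the category of partial boolean algebras with maps preserving commeasurability and the (partial) operations. Boolean algebras are the partial boolean algebras in which all pairs are commeasurable. $\mathrm{Proj}(M_n(\mathbb{C}))$ is the partial boolean algebra of projections $p=p^*=p^2$ in the $n\times n$ complex matrices, with $p\odot q$ iff $pq=qp$, $\neg p=1-p$, $p\wedge q=pq$, $p\vee q=p+q-pq$. The Stone spectrum of a boolean algebra $B$ is the locale whose frame is the frame $\mathrm{Idl}(B)$ of ideals of $B$. $\mathbf{Loc}$ is the category of locales; a locale is trivial if its frame satisfies $0=1$. *)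

From mathcomp Require Import all_boot all_order all_algebra.
From mathcomp Require Import complex.
From mathcomp Require Import Rstruct.
Set Implicit Arguments.
Unset Strict Implicit.
Unset Printing Implicit Defensive.
Import Order.TTheory GRing.Theory Num.Theory.

(* Partial boolean algebras.  The binary operations are total functions, but *)
(* only their values on commeasurable pairs matter (morphisms are only       *)
(* required to preserve them there, and the axiom only mentions them there). *)

Record PBAData := {
  pcar :> Type;
  pcomm : pcar -> pcar -> Prop;
  pzero : pcar;
  pone : pcar;
  pneg : pcar -> pcar;
  pmeet : pcar -> pcar -> pcar;
  pjoin : pcar -> pcar -> pcar }.
Arguments pcomm : clear implicits.
Arguments pneg : clear implicits.
Arguments pmeet : clear implicits.
Arguments pjoin : clear implicits.

Definition boolean_subalgebra (A : PBAData) (T : A -> Prop) : Prop :=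
  (forall x y, T x -> T y -> pcomm A x y) /\
  T (pzero A) /\ T (pone A) /\
  (forall x, T x -> T (pneg A x)) /\
  (forall x y, T x -> T y -> T (pmeet A x y)) /\
  (forall x y, T x -> T y -> T (pjoin A x y)) /\
  (forall x y z, T x -> T y -> T z ->
     pmeet A x y = pmeet A y x /\ pjoin A x y = pjoin A y x /\
     pmeet A x (pmeet A y z) = pmeet A (pmeet A x y) z /\
     pjoin A x (pjoin A y z) = pjoin A (pjoin A x y) z /\
     pmeet A x (pjoin A x y) = x /\
     pjoin A x (pmeet A x y) = x /\
     pmeet A x (pjoin A y z) = pjoin A (pmeet A x y) (pmeet A x z)) /\
  (forall x, T x ->
     pmeet A x (pone A) = x /\ pjoin A x (pzero A) = x /\
     pmeet A x (pneg A x) = pzero A /\ pjoin A x (pneg A x) = pone A).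

Definition pba_axiom (A : PBAData) : Prop :=
  (forall x, pcomm A x x) /\
  (forall x y, pcomm A x y -> pcomm A y x) /\
  (forall x, pcomm A (pzero A) x /\ pcomm A (pone A) x) /\
  (forall S : A -> Prop, (forall x y, S x -> S y -> pcomm A x y) ->
     exists T : A -> Prop, (forall x, S x -> T x) /\ boolean_subalgebra T).

Record PBA := { pdata :> PBAData; pba_ax : pba_axiom pdata }.

Record pba_hom (A B : PBA) := {
  hfun :> A -> B;
  hom_comm : forall x y, pcomm A x y -> pcomm B (hfun x) (hfun y);
  hom_zero : hfun (pzero A) = pzero B;
  hom_one : hfun (pone A) = pone B;
  hom_neg : forall x, hfun (pneg A x) = pneg B (hfun x);
  hom_meet : forall x y, pcomm A x y ->
     hfun (pmeet A x y) = pmeet B (hfun x) (hfun y);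
  hom_join : forall x y, pcomm A x y ->
     hfun (pjoin A x y) = pjoin B (hfun x) (hfun y) }.

Definition id_hom (A : PBA) : pba_hom A A.
Proof. by exists (fun x => x). Defined.

Definition comp_hom (A B C : PBA) (g : pba_hom B C) (f : pba_hom A B) :
  pba_hom A C.
Proof.
exists (fun x => g (f x)).
- by move=> x y h; do 2 apply: hom_comm.
- by rewrite !hom_zero.
- by rewrite !hom_one.
- by move=> x; rewrite !hom_neg.
- by move=> x y h; rewrite hom_meet // hom_meet //; apply: hom_comm.
- by move=> x y h; rewrite hom_join // hom_join //; apply: hom_comm.
Defined.

Definition is_boolean (A : PBA) : Prop := forall x y : A, pcomm A x y.

(* Frames (= locales; Loc is the opposite of the category of frames).       *)

Record Frame := {
  fcar :> Type;
  fle : fcar -> fcar -> Prop;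
  ftop : fcar;
  fmeet : fcar -> fcar -> fcar;
  fsup : (fcar -> Prop) -> fcar;
  fle_refl : forall a, fle a a;
  fle_trans : forall a b c, fle a b -> fle b c -> fle a c;
  fle_anti : forall a b, fle a b -> fle b a -> a = b;
  ftop_max : forall a, fle a ftop;
  fmeet_glb : forall a b c, fle c (fmeet a b) <-> (fle c a /\ fle c b);
  fsup_lub : forall (S : fcar -> Prop) c,
     fle (fsup S) c <-> (forall s, S s -> fle s c);
  fdistr : forall a (S : fcar -> Prop),
     fmeet a (fsup S) = fsup (fun y => exists2 s, S s & y = fmeet a s) }.

Definition fbot (L : Frame) : L := fsup (fun _ : L => False).

Definition trivial_locale (L : Frame) : Prop := fbot L = ftop L.

Definition frame_hom (L M : Frame) (h : L -> M) : Prop :=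
  h (ftop L) = ftop M /\
  (forall a b, h (fmeet a b) = fmeet (h a) (h b)) /\
  (forall S : L -> Prop, h (fsup S) = fsup (fun y => exists2 s, S s & y = h s)).

(* A functor F : PBoolean^op -> Loc, presented (equivalently) as a covariant
   functor PBoolean -> Frm: a PBA map f : A -> B gives the locale map
   F B -> F A, i.e. the frame homomorphism Fmap f : F A -> F B. *)
Record PBA_Loc_functor := {
  Fob : PBA -> Frame;
  Fmap : forall (A B : PBA), pba_hom A B -> Fob A -> Fob B;
  Fmap_frame_hom : forall A B (f : pba_hom A B), frame_hom (Fmap f);
  Fmap_id : forall A (x : Fob A), Fmap (id_hom A) x = x;
  Fmap_comp : forall A B C (f : pba_hom A B) (g : pba_hom B C) (x : Fob A),
     Fmap (comp_hom g f) x = Fmap g (Fmap f (x)) }.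

(* The Stone spectrum: the frame Idl(B) of ideals of a boolean algebra B.   *)
(* Ideals are represented as predicates on B; the frame operations of       *)
(* Idl(B) are: top = B, binary meet = intersection, join of a family =     *)
(* ideal generated by the union.                                            *)

Definition ple (A : PBAData) (x y : A) : Prop := pmeet A x y = x.

Definition is_ideal (A : PBAData) (I : A -> Prop) : Prop :=
  I (pzero A) /\
  (forall x y, I y -> ple x y -> I x) /\
  (forall x y, I x -> I y -> I (pjoin A x y)).

Definition idl_top (A : PBAData) : A -> Prop := fun _ => True.
Definition idl_meet (A : PBAData) (I J : A -> Prop) : A -> Prop :=
  fun x => I x /\ J x.
Definition idl_sup (A : PBAData) (S : (A -> Prop) -> Prop) : A -> Prop :=
  fun x => exists l : seq A, (forall y, List.In y l -> exists2 I, S I & I y)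
                            /\ ple x (foldr (pjoin A) (pzero A) l).

(* Stone functor on morphisms: I |-> ideal generated by f[I]
   (the down-closure of the image). *)
Definition idl_image (A B : PBA) (f : pba_hom A B) (I : A -> Prop) : B -> Prop :=
  fun y => exists2 x, I x & ple y (f x).

(* eta : Idl(A) -> L is a frame isomorphism (eta is only considered on
   ideals). *)
Definition idl_frame_iso (A : PBA) (L : Frame) (eta : (A -> Prop) -> L) : Prop :=
  eta (@idl_top A) = ftop L /\
  (forall I J, is_ideal I -> is_ideal J -> eta (idl_meet I J) = fmeet (eta I) (eta J)) /\
  (forall S : (A -> Prop) -> Prop, (forall I, S I -> is_ideal I) ->
     eta (idl_sup S) = fsup (fun y => exists2 I, S I & y = eta I)) /\
  (forall I J, is_ideal I -> is_ideal J -> eta I = eta J -> I = J) /\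
  (forall y : L, exists2 I, is_ideal I & eta I = y).

Definition Cplx := (Rdefinitions.R)[i].

Local Open Scope ring_scope.

Definition adjmx n (p : 'M[Cplx]_n) : 'M[Cplx]_n := map_mx Num.conj (p^T).

Definition is_proj n (p : 'M[Cplx]_n) : bool := (adjmx p == p) && (p *m p == p).

Definition proj n := {p : 'M[Cplx]_n | is_proj p}.

Lemma is_proj0 n : is_proj (0 : 'M[Cplx]_n).
Proof.
rewrite /is_proj /adjmx mul0mx eqxx andbT; apply/eqP/matrixP => i j.
by rewrite !mxE conjC0.
Qed.

Definition proj0 n : proj n := exist _ 0 (is_proj0 n).

Definition ProjData (n : nat) : PBAData := {|
  pcar := proj n;
  pcomm := fun p q => val p *m val q = val q *m val p;
  pzero := proj0 n;
  pone := insubd (proj0 n) (1%:M);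
  pneg := fun p => insubd (proj0 n) (1%:M - val p);
  pmeet := fun p q => insubd (proj0 n) (val p *m val q);
  pjoin := fun p q => insubd (proj0 n) (val p + val q - val p *m val q) |}.

(* A resolution of the identity q_1, ..., q_k in Proj(M_n(C)) is a boolean
   subalgebra isomorphic to the power set of {1, ..., k}, so F turns its k
   atoms into opens u(q_i) of F(Proj) that cover it and are pairwise disjoint.
   Naturality and functoriality show that u(p) does not depend on the
   resolution containing p, so u is a Kochen-Specker colouring with values in
   the frame F(Proj).  Peres' 33 rays of R^3, with coordinates in Z[sqrt 2],
   admit no such colouring: a finite case analysis, carried out as a chain of
   frame inequalities, places the top of F(Proj) below u of the projection
   onto the complement of any three consecutive coordinates.  Meeting these
   over blocks covering all n coordinates gives top <= u(0) = bottom. *)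

From mathcomp Require Import all_boot all_order all_algebra complex Rstruct ring zify.
From Stdlib Require Import FunctionalExtensionality PropExtensionality ProofIrrelevance.
Set Implicit Arguments.
Unset Strict Implicit.
Unset Printing Implicit Defensive.
Import Order.TTheory GRing.Theory Num.Theory.

Section FrameTheory.
Variable L : Frame.
Implicit Types a b c d : L.

Lemma fle_meetl a b : fle (fmeet a b) a.
Proof. by have /(fmeet_glb a b) [] := fle_refl (fmeet a b). Qed.

Lemma fle_meetr a b : fle (fmeet a b) b.
Proof. by have /(fmeet_glb a b) [] := fle_refl (fmeet a b). Qed.

Lemma fle_meet a b c : fle c a -> fle c b -> fle c (fmeet a b).
Proof. by move=> ca cb; apply/fmeet_glb. Qed.

Lemma fle_meet2 a b c d : fle a c -> fle b d -> fle (fmeet a b) (fmeet c d).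
Proof.
move=> ac bd; apply: fle_meet.
  exact: fle_trans (fle_meetl _ _) ac.
exact: fle_trans (fle_meetr _ _) bd.
Qed.

Lemma fmeetC a b : fmeet a b = fmeet b a.
Proof. by apply: fle_anti; apply: fle_meet; (apply: fle_meetr || apply: fle_meetl). Qed.

Lemma fmeet_idPl a b : fle a b -> fmeet a b = a.
Proof.
move=> ab; apply: fle_anti; first exact: fle_meetl.
by apply: fle_meet => //; apply: fle_refl.
Qed.

Lemma fsup_ub (S : L -> Prop) s : S s -> fle s (fsup S).
Proof. by move=> Ss; have /(fsup_lub S (fsup S)) := fle_refl (fsup S); apply. Qed.

Lemma fsup_le (S : L -> Prop) c : (forall s, S s -> fle s c) -> fle (fsup S) c.
Proof. by move=> Sc; apply/fsup_lub. Qed.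

Lemma fbot_le c : fle (fbot L) c.
Proof. by apply: fsup_le. Qed.

Lemma ftop_le_bot : fle (ftop L) (fbot L) -> trivial_locale L.
Proof. by move=> topbot; apply: fle_anti; [apply: fbot_le | ]. Qed.

End FrameTheory.

Section FrameHomTheory.
Variables (L M : Frame) (h : L -> M).
Hypothesis hh : frame_hom h.

Lemma frame_hom_top : h (ftop L) = ftop M.
Proof. by case: hh. Qed.

Lemma frame_hom_meet a b : h (fmeet a b) = fmeet (h a) (h b).
Proof. by case: hh => _ []. Qed.

Lemma frame_hom_sup S : h (fsup S) = fsup (fun y => exists2 s, S s & y = h s).
Proof. by case: hh => _ [] _ ->. Qed.

Lemma frame_hom_le a b : fle a b -> fle (h a) (h b).
Proof. by move=> /fmeet_idPl <-; rewrite frame_hom_meet; apply: fle_meetr. Qed.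

Lemma frame_hom_bot : h (fbot L) = fbot M.
Proof.
rewrite /fbot frame_hom_sup; apply: fle_anti; last exact: fbot_le.
by apply: fsup_le => s [].
Qed.

End FrameHomTheory.

Lemma pred_ext (T : Type) (P Q : T -> Prop) : (forall x, P x <-> Q x) -> P = Q.
Proof.
by move=> PQ; apply: functional_extensionality => x; apply: propositional_extensionality.
Qed.

Lemma pba_hom_ext (A B : PBA) (f g : pba_hom A B) : (forall x, f x = g x) -> f = g.
Proof.
case: f => f ? ? ? ? ? ?; case: g => g ? ? ? ? ? ? /= fg.
have fg' : f = g by apply: functional_extensionality.
by subst g; f_equal; apply: proof_irrelevance.
Qed.

Lemma pba_hom_ple (A B : PBA) (f : pba_hom A B) (x y : A) :
  pcomm A x y -> ple x y -> ple (f x) (f y).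
Proof. by move=> xy; rewrite /ple => xy_x; rewrite -hom_meet // xy_x. Qed.

Definition setPBAData (k : nat) : PBAData := {|
  pcar := {set 'I_k};
  pcomm := fun _ _ => True;
  pzero := set0;
  pone := setT;
  pneg := fun x => ~: x;
  pmeet := fun x y => x :&: y;
  pjoin := fun x y => x :|: y |}.

Lemma setPBA_axiom k : pba_axiom (setPBAData k).
Proof.
do 3!split => //.
move=> S _; exists (fun _ => True); split => //.
do 7!split => //.
  move=> x y z _ _ _ /=; split; first exact: setIC.
  split; first exact: setUC. split; first exact: setIA. split; first exact: setUA.
  split; first by rewrite [x :|: y]setUC setKU.
  split; first by rewrite [x :&: y]setIC setKI.
  exact: setIUr.
by move=> x _ /=; rewrite setIT setU0 setICr setUCr.
Qed.

Definition setPBA k : PBA := {| pdata := setPBAData k; pba_ax := setPBA_axiom k |}.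

Lemma setPBA_boolean k : is_boolean (setPBA k).
Proof. by []. Qed.

Lemma ple_setE k (X Y : setPBA k) : ple X Y <-> X \subset Y.
Proof. by rewrite /ple /=; split => [<- | /setIidPl]; [apply: subsetIr | ]. Qed.

Lemma setPBA_hom_subset k m (f : pba_hom (setPBA k) (setPBA m)) (X Y : {set 'I_k}) :
  X \subset Y -> f X \subset f Y.
Proof. by move=> /ple_setE XY; apply/ple_setE; apply: pba_hom_ple. Qed.

Definition principal k (S : {set 'I_k}) : setPBA k -> Prop := fun X => X \subset S.

Lemma principal_ideal k (S : {set 'I_k}) : is_ideal (principal S).
Proof.
split; first exact: sub0set.
split; first by move=> x y yS /ple_setE xy; apply: subset_trans xy yS.
by move=> x y xS yS; rewrite /principal subUset xS yS.
Qed.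

Lemma principal_meet k (S T : {set 'I_k}) :
  idl_meet (principal S) (principal T) = principal (S :&: T).
Proof.
by apply: pred_ext => x; rewrite /idl_meet /principal subsetI; split => [[-> ->] | /andP].
Qed.

Lemma principal0 k : principal (set0 : {set 'I_k}) = idl_sup (fun _ => False).
Proof.
apply: pred_ext => x; split.
  by move=> x0; exists [::]; split => //; apply/ple_setE.
move=> [[|y l] [inl /ple_setE x0]] //.
by have [I []] := inl y (or_introl erefl).
Qed.

Lemma principalT k : principal (setT : {set 'I_k}) = @idl_top (setPBA k).
Proof. by apply: pred_ext => x; rewrite /principal subsetT. Qed.

Lemma idl_top_setPBA k :
  @idl_top (setPBA k) = idl_sup (fun I => exists i : 'I_k, I = principal [set i]).
Proof.
apply: pred_ext => x; split => // _.
exists [seq [set i] | i <- enum 'I_k]; split.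
  move=> y /List.in_map_iff [i [<- _]].
  by exists (principal [set i]); [exists i | apply: subxx].
apply/ple_setE; apply/subsetP => i _.
suff -> : foldr (pjoin (setPBA k)) (pzero _) [seq [set j] | j <- enum 'I_k] = setT by [].
by apply/setP => j; rewrite inE; elim: (enum 'I_k) (mem_enum predT j) => //= i0 s IH;
  rewrite !inE => /orP [/eqP -> | /IH ->]; rewrite ?eqxx ?orbT.
Qed.

Lemma set2_cases (T : {set 'I_2}) :
  [\/ T = set0, T = [set ord0], T = ~: [set ord0] | T = setT].
Proof.
have ord2 (i : 'I_2) : (i == ord0) || (i == ord_max) by case: i => [[|[|m]] ?].
case T0: (ord0 \in T); case T1: (ord_max \in T);
  [constructor 4 | constructor 2 | constructor 3 | constructor 1];
  by apply/setP => i; rewrite !inE; case/orP: (ord2 i) => /eqP ->.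
Qed.

Lemma setPBA2_hom_ext (B : PBA) (f g : pba_hom (setPBA 2) B) :
  f [set ord0] = g [set ord0] -> f = g.
Proof.
move=> fg0; apply: pba_hom_ext => T.
have [->| -> | -> | ->] := set2_cases T.
- by rewrite (hom_zero f) (hom_zero g).
- exact: fg0.
- by rewrite (hom_neg f [set ord0]) (hom_neg g [set ord0]) fg0.
- by rewrite (hom_one f) (hom_one g).
Qed.

Section SplitHom.
Variables (k : nat) (S : {set 'I_k}).

Definition split_set (T : {set 'I_2}) : {set 'I_k} :=
  [set i | ((i \in S) && (ord0 \in T)) || ((i \notin S) && (ord_max \in T))].

Definition split_hom : pba_hom (setPBA 2) (setPBA k).
Proof.
exists split_set => //= [||T|T T' _|T T' _]; apply/setP => x; rewrite !inE /=;
  by do ![case: (_ \in _)].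
Defined.

Lemma split_hom0 : split_hom [set ord0] = S.
Proof. by apply/setP => x; rewrite /= !inE eqxx; case: (x \in S). Qed.

End SplitHom.

Section Adjoint.
Local Open Scope ring_scope.
Variable n : nat.
Implicit Types p q : 'M[Cplx]_n.

Lemma adjmxE (A : 'M[Cplx]_n) i j : adjmx A i j = (A j i)^*.
Proof. by rewrite !mxE. Qed.

Lemma adjmxD p q : adjmx (p + q) = adjmx p + adjmx q.
Proof. by apply/matrixP => i j; rewrite !mxE rmorphD. Qed.

Lemma adjmxB p q : adjmx (p - q) = adjmx p - adjmx q.
Proof. by apply/matrixP => i j; rewrite !mxE rmorphB. Qed.

Lemma adjmxM p q : adjmx (p *m q) = adjmx q *m adjmx p.
Proof. by rewrite /adjmx trmx_mul map_mxM. Qed.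

Lemma adjmx0 : adjmx (0 : 'M[Cplx]_n) = 0.
Proof. by apply/matrixP => i j; rewrite !mxE rmorph0. Qed.

Lemma adjmx1 : adjmx (1%:M : 'M[Cplx]_n) = 1%:M.
Proof. by apply/matrixP => i j; rewrite !mxE conjC_nat eq_sym. Qed.

Lemma adjmx_sum (I : finType) (P : pred I) (f : I -> 'M[Cplx]_n) :
  adjmx (\sum_(i | P i) f i) = \sum_(i | P i) adjmx (f i).
Proof. by elim/big_rec2: _ => [|i x y _ <-]; rewrite ?adjmx0 ?adjmxD. Qed.

End Adjoint.

Section Resolutions.
Local Open Scope ring_scope.
Variables (n : nat) (H : pba_axiom (ProjData n)).

Definition ProjPBA : PBA := {| pdata := ProjData n; pba_ax := H |}.

Lemma val_insubd_proj (x : 'M[Cplx]_n) : is_proj x -> val (insubd (proj0 n) x) = x.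
Proof. by move=> px; rewrite val_insubd px. Qed.

Lemma adjmx_proj (p : proj n) : adjmx (val p) = val p.
Proof. by case/andP: (valP p) => /eqP. Qed.

Lemma proj_idem (p : proj n) : val p *m val p = val p.
Proof. by case/andP: (valP p) => _ /eqP. Qed.

Lemma proj_mulE (p q : proj n) (P Q : 'M[Cplx]_n) :
  val p = P -> val q = Q -> val p *m val q = P *m Q.
Proof. by move=> -> ->. Qed.

Lemma proj_orthC (p q : proj n) : val p *m val q = 0 -> val q *m val p = 0.
Proof. by move=> /(congr1 (@adjmx n)); rewrite adjmxM adjmx0 !adjmx_proj. Qed.

Section Resolution.
Variables (k : nat) (q : 'I_k -> proj n).
Hypothesis q_orth : forall i j, i != j -> val (q i) *m val (q j) = 0.
Hypothesis q_sum : \sum_i val (q i) = 1%:M.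

Definition proj_sum (S : {set 'I_k}) : 'M[Cplx]_n := \sum_(i in S) val (q i).

Lemma proj_sum0 : proj_sum set0 = 0.
Proof. by rewrite /proj_sum big_set0. Qed.

Lemma proj_sum1 i : proj_sum [set i] = val (q i).
Proof. by rewrite /proj_sum big_set1. Qed.

Lemma proj_sumT : proj_sum setT = 1%:M.
Proof. by rewrite -q_sum /proj_sum; apply: eq_bigl => i; rewrite inE. Qed.

Lemma proj_sumC S : proj_sum (~: S) = 1%:M - proj_sum S.
Proof. by rewrite -proj_sumT /proj_sum [in RHS](big_setID S) /= setTI setTD addrC addrK. Qed.

Lemma proj_sumU S T : proj_sum (S :|: T) = proj_sum S + proj_sum T - proj_sum (S :&: T).
Proof.
rewrite /proj_sum (big_setID S) /= setIUl setIid setDUl setDv set0U.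
rewrite [X in _ = _ + X - _](big_setID S) /= [T :&: S]setIC.
rewrite [S :|: _](_ : _ = S); last by rewrite setIC setKI.
by rewrite addrCA addrAC subrr add0r.
Qed.

Lemma mul_proj_sum i T :
  val (q i) *m proj_sum T = if i \in T then val (q i) else 0.
Proof.
rewrite mulmx_sumr; case: ifP => iT.
  rewrite (big_setD1 i) //= big1 ?addr0 ?proj_idem // => j.
  by rewrite !inE => /andP [ji _]; rewrite q_orth // eq_sym.
by rewrite big1 // => j jT; rewrite q_orth //; apply: contraFN iT => /eqP ->.
Qed.

Lemma proj_sumM S T : proj_sum S *m proj_sum T = proj_sum (S :&: T).
Proof.
rewrite {1}/proj_sum mulmx_suml (eq_bigr _ (fun i _ => mul_proj_sum i T)).
rewrite (big_setID T) /= [X in _ + X]big1 ?addr0 => [|i]; last first.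
  by rewrite !inE => /andP [/negbTE ->].
by apply: eq_bigr => i; rewrite inE => /andP [_ ->].
Qed.

Lemma is_proj_sum S : is_proj (proj_sum S).
Proof.
rewrite /is_proj proj_sumM setIid eqxx andbT /proj_sum adjmx_sum.
by apply/eqP; apply: eq_bigr => i _; rewrite adjmx_proj.
Qed.

Definition set_proj (S : {set 'I_k}) : proj n := insubd (proj0 n) (proj_sum S).

Lemma set_projE S : val (set_proj S) = proj_sum S.
Proof. exact/val_insubd_proj/is_proj_sum. Qed.

Lemma set_projM S T : val (set_proj S) *m val (set_proj T) = proj_sum (S :&: T).
Proof. by rewrite (proj_mulE (set_projE S) (set_projE T)) proj_sumM. Qed.

Lemma set_proj1 i : set_proj [set i] = q i.
Proof. by apply: val_inj; rewrite set_projE proj_sum1. Qed.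

Definition resolution_hom : pba_hom (setPBA k) ProjPBA.
Proof.
exists set_proj => /= [S T _||||S T _|S T _].
- by rewrite (set_projM S T) (set_projM T S) setIC.
- by apply: val_inj; rewrite set_projE proj_sum0.
- by rewrite /set_proj proj_sumT.
- by move=> S; rewrite set_projE -proj_sumC.
- by rewrite set_projM.
- by rewrite set_projM (set_projE S) (set_projE T) -proj_sumU.
Defined.

End Resolution.

Lemma is_proj_compl (p : proj n) : is_proj (1%:M - val p).
Proof.
rewrite /is_proj adjmxB adjmx1 adjmx_proj eqxx /=.
by rewrite mulmxBl !mulmxBr !mul1mx mulmx1 proj_idem subrr subr0.
Qed.

Definition proj_compl (p : proj n) : proj n := insubd (proj0 n) (1%:M - val p).

Lemma proj_complE p : val (proj_compl p) = 1%:M - val p.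
Proof. exact/val_insubd_proj/is_proj_compl. Qed.

Section Completion.
Variables (k : nat) (a : 'I_k -> proj n).
Hypothesis a_orth : forall i j, i != j -> val (a i) *m val (a j) = 0.

Definition complete_family (i : 'I_k.+1) : proj n :=
  if unlift ord_max i is Some j then a j else proj_compl (set_proj a setT).

Lemma complete_family_lift j : complete_family (lift ord_max j) = a j.
Proof. by rewrite /complete_family liftK. Qed.

Lemma complete_family_max : complete_family ord_max = proj_compl (set_proj a setT).
Proof. by rewrite /complete_family unlift_none. Qed.

Lemma complete_family_orth i j : i != j ->
  val (complete_family i) *m val (complete_family j) = 0.
Proof.
have sumTa l : proj_sum a setT *m val (a l) = val (a l).
  by rewrite -proj_sum1 proj_sumM // setTI.
rewrite /complete_family; case: unliftP => [i' ->|->]; case: unliftP => [j' ->|->] //.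
- by move=> ij; apply: a_orth; apply: contraNneq ij => ->.
- by rewrite proj_complE set_projE // mulmxBr mulmx1 mul_proj_sum // inE subrr.
- by rewrite proj_complE set_projE // mulmxBl mul1mx sumTa subrr.
- by rewrite eqxx.
Qed.

Lemma complete_family_sum : \sum_i val (complete_family i) = 1%:M.
Proof.
rewrite big_ord_recr /= complete_family_max proj_complE set_projE //.
rewrite (eq_bigr (fun i => val (a i))) => [|i _]; last first.
  rewrite (_ : widen_ord _ i = lift ord_max i) ?complete_family_lift //.
  by apply: val_inj; rewrite /= /bump leqNgt ltn_ord.
have -> : proj_sum a setT = \sum_i val (a i) by apply: eq_bigl => i; rewrite inE.
by rewrite addrC subrK.
Qed.

End Completion.

Definition binary_family (p : proj n) : 'I_2 -> proj n :=
  complete_family (fun _ : 'I_1 => p).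

Lemma ord1_orth (p : proj n) (i j : 'I_1) : i != j -> val p *m val p = 0.
Proof. by case: i j => -[|?] ? [[|?] ?]. Qed.

Lemma binary_family_orth p i j : i != j ->
  val (binary_family p i) *m val (binary_family p j) = 0.
Proof. exact/complete_family_orth/ord1_orth. Qed.

Lemma binary_family_sum p : \sum_i val (binary_family p i) = 1%:M.
Proof. exact/complete_family_sum/ord1_orth. Qed.

Definition binary_hom (p : proj n) : pba_hom (setPBA 2) ProjPBA :=
  resolution_hom (@binary_family_orth p) (binary_family_sum p).

Lemma binary_hom0 p : binary_hom p [set ord0] = p.
Proof.
rewrite /binary_hom /= set_proj1; last exact: binary_family_orth.
by rewrite /binary_family (_ : ord0 = lift ord_max ord0) ?complete_family_lift //; apply: val_inj.
Qed.

Lemma coord_proj_is_proj (i : 'I_n) : is_proj (delta_mx i i : 'M[Cplx]_n).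
Proof.
rewrite /is_proj mul_delta_mx eqxx andbT; apply/eqP/matrixP => a b.
by rewrite !mxE conjC_nat andbC.
Qed.

Definition coord_proj (i : 'I_n) : proj n := insubd (proj0 n) (delta_mx i i).

Lemma coord_projE i : val (coord_proj i) = delta_mx i i.
Proof. exact/val_insubd_proj/coord_proj_is_proj. Qed.

Lemma coord_proj_orth i j : i != j -> val (coord_proj i) *m val (coord_proj j) = 0.
Proof. by move=> ij; rewrite !coord_projE mul_delta_mx_0. Qed.

Lemma coord_proj_sum : \sum_i val (coord_proj i) = 1%:M.
Proof. by rewrite (mx1_sum_delta Cplx n); apply: eq_bigr => i _; rewrite coord_projE. Qed.

End Resolutions.

Section PeresRays.
Local Open Scope ring_scope.

(* A pair [(a, b)] stands for [a + b * sqrt 2]. *)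
Definition zsqrt2 := (int * int)%type.
Definition zs_add (x y : zsqrt2) : zsqrt2 := (x.1 + y.1, x.2 + y.2).
Definition zs_mul (x y : zsqrt2) : zsqrt2 := (x.1 * y.1 + 2 * x.2 * y.2, x.1 * y.2 + x.2 * y.1).

Definition ray := (zsqrt2 * zsqrt2 * zsqrt2)%type.
Definition ray_coord (r : ray) (j : nat) : zsqrt2 :=
  if j is 0 then r.1.1 else if j is 1 then r.1.2 else r.2.
Definition ray_dot (r t : ray) : zsqrt2 :=
  zs_add (zs_mul (ray_coord r 0) (ray_coord t 0))
    (zs_add (zs_mul (ray_coord r 1) (ray_coord t 1)) (zs_mul (ray_coord r 2) (ray_coord t 2))).

Definition zO : zsqrt2 := (0, 0).
Definition zI : zsqrt2 := (1, 0).
Definition zN : zsqrt2 := (-1, 0).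
Definition zR : zsqrt2 := (0, 1).
Definition zNR : zsqrt2 := (0, -1).

(* Peres' 33 rays in R^3 and their 16 orthogonal triads. *)
Definition peres_rays : seq ray := [::
  (zO, zO, zI); (zO, zI, zO); (zI, zO, zO);
  (zO, zI, zI); (zO, zI, zN); (zI, zO, zI); (zI, zO, zN); (zI, zI, zO); (zI, zN, zO);
  (zO, zI, zR); (zO, zI, zNR); (zO, zR, zI); (zO, zR, zN);
  (zI, zO, zR); (zI, zO, zNR); (zI, zR, zO); (zI, zNR, zO);
  (zR, zO, zI); (zR, zO, zN); (zR, zI, zO); (zR, zN, zO);
  (zI, zI, zR); (zI, zI, zNR); (zI, zN, zR); (zI, zN, zNR);
  (zI, zR, zI); (zI, zR, zN); (zI, zNR, zI); (zI, zNR, zN);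
  (zR, zI, zI); (zR, zI, zN); (zR, zN, zI); (zR, zN, zN)].

Definition peres_triads : seq (seq nat) := [::
  [:: 0; 1; 2]; [:: 0; 7; 8]; [:: 0; 15; 20]; [:: 0; 16; 19];
  [:: 1; 5; 6]; [:: 1; 13; 18]; [:: 1; 14; 17]; [:: 2; 3; 4];
  [:: 2; 9; 12]; [:: 2; 10; 11]; [:: 3; 30; 31]; [:: 4; 29; 32];
  [:: 5; 26; 28]; [:: 6; 25; 27]; [:: 7; 23; 24]; [:: 8; 21; 22]].

Definition peres_ray (x : nat) : ray := nth (zO, zO, zO) peres_rays x.
Definition peres_orthb (x y : nat) : bool := ray_dot (peres_ray x) (peres_ray y) == zO.

End PeresRays.

(* [ks_refutes fuel S] certifies that no 0/1-colouring of the rays makes every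
   ray of [S] true, no two orthogonal rays true, and some ray of each triad
   true: it branches over the rays of a triad avoiding [S] (the one with the
   fewest rays not orthogonal to [S]) until two true rays are orthogonal. *)
Definition has_orth_pair (S : seq nat) : bool := has (fun x => has (peres_orthb x) S) S.
Definition ray_alive (S : seq nat) (x : nat) : bool := ~~ has (peres_orthb x) S.

Definition next_triad (S : seq nat) : option (seq nat) :=
  foldr (fun t acc =>
    if has (mem S) t then acc else
    match acc with
    | None => Some t
    | Some t' => if count (ray_alive S) t < count (ray_alive S) t' then Some t else acc
    end) None peres_triads.

(* [if] rather than [||]: [vm_compute] would evaluate both arguments of [orb]. *)
Fixpoint ks_refutes (fuel : nat) (S : seq nat) : bool :=
  if fuel is fuel'.+1 then
    if has_orth_pair S then true else
    if next_triad S is Some t then all (fun x => ks_refutes fuel' (x :: S)) t else false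
  else false.

Lemma next_triad_in S t : next_triad S = Some t -> t \in peres_triads.
Proof.
rewrite /next_triad; elim: peres_triads t => [|t0 ts IH] t //=.
case: has; first by move/IH; rewrite inE orbC => ->.
case E: (foldr _ _ ts) => [t'|]; last by case=> <-; rewrite inE eqxx.
by case: ifP => _ [<-]; rewrite inE ?eqxx // (IH _ E) orbT.
Qed.

Section KSRefutationSound.
Variables (L : Frame) (a : nat -> L) (c : L).
Hypothesis triad_cover : forall t, t \in peres_triads ->
  fle (ftop L) (fsup (fun y => y = c \/ exists2 x, x \in t & y = a x)).
Hypothesis orth_disjoint : forall x y, peres_orthb x y -> fmeet (a x) (a y) = fbot L.

Definition fmeet_seq (S : seq nat) : L := foldr (fun x acc => fmeet (a x) acc) (ftop L) S.

Lemma fmeet_seq_le S x : x \in S -> fle (fmeet_seq S) (a x).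
Proof.
elim: S => [|y S IH] //=; rewrite inE => /orP [/eqP -> | xS].
  exact: fle_meetl.
exact: fle_trans (fle_meetr _ _) (IH xS).
Qed.

Lemma ks_refutes_sound fuel S : ks_refutes fuel S -> fle (fmeet_seq S) c.
Proof.
elim: fuel S => [|fuel IH] S //=; case: ifP => [/hasP [x xS /hasP [y yS xy]] _ | _].
  apply: fle_trans (fle_meet (fmeet_seq_le xS) (fmeet_seq_le yS)) _.
  by rewrite orth_disjoint //; apply: fbot_le.
case E: (next_triad S) => [t|] // /allP t_refuted.
have S_top : fle (fmeet_seq S) (fmeet (fmeet_seq S) (ftop L)).
  by apply: fle_meet; [apply: fle_refl | apply: ftop_max].
apply: fle_trans S_top _.
apply: fle_trans (fle_meet2 (fle_refl _) (triad_cover (next_triad_in E))) _.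
rewrite fdistr; apply: fsup_le => _ [y [-> | [x xt ->]] ->]; first exact: fle_meetr.
by rewrite fmeetC; apply: (IH (x :: S)); apply: t_refuted.
Qed.

End KSRefutationSound.

Lemma peres_refuted : ks_refutes 20 [::].
Proof. by vm_compute. Qed.

Definition peres_nonzero (x : nat) : bool :=
  let d := ray_dot (peres_ray x) (peres_ray x) in (d.2 == 0%R) && (0 < d.1)%R.

Lemma peres_triads_ok : all (fun t =>
  [&& size t == 3, uniq t, all peres_nonzero t &
      all (fun x => all (fun y => (x == y) || peres_orthb x y) t) t]) peres_triads.
Proof. by vm_compute. Qed.

Section RayGeometry.
Local Open Scope ring_scope.

Definition sqrt2C : Cplx := sqrtC 2.

Definition zsC (x : zsqrt2) : Cplx := x.1%:~R + x.2%:~R * sqrt2C.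

Lemma zsC_real x : zsC x \is Num.real.
Proof. by rewrite rpredD ?rpredM ?realz // ger0_real // sqrtC_ge0 ler0n. Qed.

Lemma zsC_add x y : zsC (zs_add x y) = zsC x + zsC y.
Proof. by rewrite /zsC /= !intrD; ring. Qed.

Lemma zsC_mul x y : zsC (zs_mul x y) = zsC x * zsC y.
Proof.
have s2s2 : sqrt2C * sqrt2C = 2 by rewrite -expr2 sqrtCK.
rewrite /zsC /=.
transitivity ((x.1 * y.1)%:~R + (x.1 * y.2 + x.2 * y.1)%:~R * sqrt2C
              + (x.2 * y.2)%:~R * 2 : Cplx); first by rewrite !intrD !intrM; ring.
by rewrite -s2s2 !intrD !intrM; ring.
Qed.

Lemma zsC0 : zsC zO = 0.
Proof. by rewrite /zsC /= mul0r addr0. Qed.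

Lemma zsC_neq0 (x : zsqrt2) : (x.2 == 0) && (0 < x.1) -> zsC x != 0.
Proof.
by case/andP => /eqP x2 x1; rewrite /zsC x2 mul0r addr0 intr_eq0 lt0r_neq0.
Qed.

Definition ray_row (r : ray) : 'rV[Cplx]_3 := \row_(j < 3) zsC (ray_coord r j).

Lemma ray_row_dot r t : (ray_row r *m (ray_row t)^T) 0 0 = zsC (ray_dot r t).
Proof. by rewrite !mxE !big_ord_recl big_ord0 addr0 !zsC_add !zsC_mul !mxE. Qed.

Variables (n c : nat).
Hypothesis block_fits : (c + 3 <= n)%N.

Definition block_embed : 'M[Cplx]_(3, n) := \matrix_(a < 3, j < n) ((c + a)%N == j)%:R.

Lemma block_embed_mulT : block_embed *m block_embed^T = 1%:M.
Proof.
apply/matrixP => a b; rewrite !mxE.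
have ca : (c + a < n)%N by apply: leq_trans block_fits; rewrite ltn_add2l.
rewrite (bigD1 (Ordinal ca)) //= big1 ?addr0.
  by rewrite !mxE eqxx mul1r eqn_add2l eq_sym.
move=> j ja; rewrite !mxE (_ : (c + a == j)%N = false) ?mul0r //.
by apply: contraNF ja => /eqP ca_j; apply/eqP/val_inj.
Qed.

Definition ray_vec (r : ray) : 'rV[Cplx]_n := ray_row r *m block_embed.

Lemma ray_vec_dot r t : ray_vec r *m (ray_vec t)^T = (zsC (ray_dot r t))%:M.
Proof.
rewrite /ray_vec trmx_mul mulmxA -(mulmxA (ray_row r)) block_embed_mulT mulmx1.
by rewrite [LHS]mx11_scalar ray_row_dot.
Qed.

Lemma ray_vec_real r j : ray_vec r 0 j \is Num.real.
Proof. by rewrite !mxE rpred_sum // => a _; rewrite !mxE rpredM ?zsC_real ?realn. Qed.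

Definition ray_projmx (r : ray) : 'M[Cplx]_n :=
  (zsC (ray_dot r r))^-1 *: ((ray_vec r)^T *m ray_vec r).

Lemma ray_projmxE r i j :
  ray_projmx r i j = (zsC (ray_dot r r))^-1 * (ray_vec r 0 i * ray_vec r 0 j).
Proof. by rewrite !mxE big_ord1 !mxE. Qed.

(* For a zero ray the inverse is the junk value [0^-1 = 0], so [ray_projmx] is [0]. *)
Lemma is_proj_ray r : is_proj (ray_projmx r).
Proof.
have [d0 | d_neq0] := eqVneq (zsC (ray_dot r r)) 0.
  by rewrite /ray_projmx d0 invr0 scale0r is_proj0.
apply/andP; split; apply/eqP.
  apply/matrixP => i j; rewrite adjmxE !ray_projmxE.
  by rewrite conj_Creal ?[ray_vec r 0 j * _]mulrC // rpredM ?rpredV ?zsC_real ?rpredM ?ray_vec_real.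
rewrite /ray_projmx -scalemxAl -scalemxAr scalerA mulmxA -(mulmxA _ (ray_vec r)) ray_vec_dot.
by rewrite mul_mx_scalar -scalemxAl scalerA -mulrA mulVf // mulr1.
Qed.

Lemma ray_projmx_orth r t : ray_dot r t = zO -> ray_projmx r *m ray_projmx t = 0.
Proof.
move=> rt; rewrite /ray_projmx -scalemxAl -scalemxAr mulmxA -(mulmxA _ (ray_vec r)).
by rewrite ray_vec_dot rt zsC0 mul_mx_scalar scale0r mul0mx !scaler0.
Qed.

Definition ray_proj (r : ray) : proj n := insubd (proj0 n) (ray_projmx r).

Lemma ray_projE r : val (ray_proj r) = ray_projmx r.
Proof. exact/val_insubd_proj/is_proj_ray. Qed.

Lemma ray_proj_orth r t : ray_dot r t = zO -> val (ray_proj r) *m val (ray_proj t) = 0.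
Proof. by move=> rt; rewrite (proj_mulE (ray_projE r) (ray_projE t)) ray_projmx_orth. Qed.

Section Triad.
Variable tri : 'I_3 -> ray.
Hypothesis tri_orth : forall a b, a != b -> ray_dot (tri a) (tri b) = zO.
Hypothesis tri_neq0 : forall a, zsC (ray_dot (tri a) (tri a)) != 0.
Let d a := zsC (ray_dot (tri a) (tri a)).

(* The rows of [M] form an orthogonal basis of C^3 and [N^T] is the inverse
   of [M]; hence the rank-one projections onto the rows sum to the identity. *)
Let M : 'M[Cplx]_3 := \matrix_(a < 3, j < 3) ray_row (tri a) 0 j.
Let N : 'M[Cplx]_3 := \matrix_(a < 3, j < 3) ((d a)^-1 * ray_row (tri a) 0 j).

Lemma triad_dual_basis : N *m M^T = 1%:M.
Proof.
apply/matrixP => a b.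
have -> : (N *m M^T) a b = (d a)^-1 * (ray_row (tri a) *m (ray_row (tri b))^T) 0 0.
  by rewrite !mxE mulr_sumr; apply: eq_bigr => j _; rewrite !mxE mulrA.
rewrite ray_row_dot !mxE; case: eqP => [<- | /eqP ab]; first by rewrite mulVf ?tri_neq0.
by rewrite tri_orth // zsC0 mulr0.
Qed.

Lemma sum_ray_projmx_triad : \sum_a ray_projmx (tri a) = block_embed^T *m block_embed.
Proof.
have MtN : M^T *m N = 1%:M by apply: mulmx1C; exact: triad_dual_basis.
have sumMN : \sum_a (d a)^-1 *: ((ray_row (tri a))^T *m ray_row (tri a)) = M^T *m N.
  apply/matrixP => i j; rewrite summxE !mxE; apply: eq_bigr => a _.
  by rewrite !mxE big_ord1 !mxE mulrCA.
transitivity (block_embed^T *m (\sum_a (d a)^-1 *: ((ray_row (tri a))^T *m ray_row (tri a)))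
                *m block_embed); last by rewrite sumMN MtN mulmx1.
rewrite mulmx_sumr mulmx_suml; apply: eq_bigr => a _.
by rewrite /ray_projmx /ray_vec trmx_mul -scalemxAr -scalemxAl !mulmxA.
Qed.

End Triad.

Definition block_set : {set 'I_n} := [set j : 'I_n | (c <= j < c + 3)%N].

Lemma block_embed_Tmul : block_embed^T *m block_embed = proj_sum (@coord_proj n) block_set.
Proof.
apply/matrixP => i j; rewrite !mxE /proj_sum summxE.
rewrite [in RHS]big_mkcond /= [in RHS](bigD1 i) //= [X in _ = _ + X]big1 ?addr0; last first.
  move=> t ti; case: (t \in block_set) => //; rewrite coord_projE !mxE.
  by rewrite (_ : (i == t) = false) //; apply/negbTE; rewrite eq_sym.
rewrite coord_projE !mxE eqxx /= inE !big_ord_recl big_ord0 !mxE /=.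
rewrite addr0 -!natrM -!natrD /bump /=.
case: ifP => h; [|rewrite -[RHS]/((0%N)%:R)]; congr (_ %:R);
  move: h; rewrite -?[j == i]/(nat_of_ord j == nat_of_ord i)%N; lia.
Qed.

End RayGeometry.

Section StoneFunctor.
Variables (F : PBA_Loc_functor) (eta : forall A : PBA, (A -> Prop) -> Fob F A).
Hypothesis eta_iso : forall A : PBA, is_boolean A -> idl_frame_iso (@eta A).
Hypothesis eta_nat : forall (A B : PBA) (f : pba_hom A B), is_boolean A -> is_boolean B ->
  forall I : A -> Prop, is_ideal I -> @Fmap F A B f (@eta A I) = @eta B (idl_image f I).

Section EtaDown.
Variable k : nat.
Implicit Types S T : {set 'I_k}.
Let iso := eta_iso (@setPBA_boolean k).

Definition eta_down (S : {set 'I_k}) : Fob F (setPBA k) := @eta (setPBA k) (principal S).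

Lemma eta_down_meet S T : fmeet (eta_down S) (eta_down T) = eta_down (S :&: T).
Proof.
case: iso => _ [iso_meet _].
by rewrite /eta_down -iso_meet ?principal_meet //; apply: principal_ideal.
Qed.

Lemma eta_down_le S T : S \subset T -> fle (eta_down S) (eta_down T).
Proof. by move=> /setIidPl <-; rewrite -eta_down_meet; apply: fle_meetr. Qed.

Lemma eta_down0 : eta_down set0 = fbot _.
Proof.
case: iso => _ [_ [iso_sup _]]; rewrite /eta_down principal0 iso_sup //.
by apply: fle_anti; [apply: fsup_le => s [] | apply: fbot_le].
Qed.

Lemma eta_downT : eta_down setT = ftop _.
Proof. by case: iso => iso_top _; rewrite /eta_down principalT. Qed.

Lemma eta_down_cover : fle (ftop _) (fsup (fun y => exists i, y = eta_down [set i])).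
Proof.
case: iso => iso_top [_ [iso_sup _]]; rewrite -iso_top idl_top_setPBA iso_sup.
  by apply: fsup_le => s [I [i ->] ->]; apply: fsup_ub; exists i.
by move=> I [i ->]; apply: principal_ideal.
Qed.

End EtaDown.

Lemma eta_down_nat k m (g : pba_hom (setPBA k) (setPBA m)) (X : {set 'I_k}) :
  Fmap g (eta_down X) = eta_down (g X).
Proof.
rewrite /eta_down eta_nat //; last exact: principal_ideal.
congr (@eta _); apply: pred_ext => Y.
split => [[Z ZX /ple_setE YgZ] | YgX]; last by exists X; [apply: subxx | apply/ple_setE].
exact: subset_trans YgZ (setPBA_hom_subset g ZX).
Qed.

Section HomOpen.
Variables (k : nat) (A : PBA) (h : pba_hom (setPBA k) A).
Implicit Types S T : {set 'I_k}.
Let Fh := Fmap_frame_hom F h.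

Definition hom_open (S : {set 'I_k}) : Fob F A := Fmap h (eta_down S).

Lemma hom_open_meet S T : fmeet (hom_open S) (hom_open T) = hom_open (S :&: T).
Proof. by rewrite /hom_open -frame_hom_meet // eta_down_meet. Qed.

Lemma hom_open_le S T : S \subset T -> fle (hom_open S) (hom_open T).
Proof. by move=> ST; apply: frame_hom_le => //; apply: eta_down_le. Qed.

Lemma hom_open0 : hom_open set0 = fbot _.
Proof. by rewrite /hom_open eta_down0 frame_hom_bot. Qed.

Lemma hom_openT : hom_open setT = ftop _.
Proof. by rewrite /hom_open eta_downT frame_hom_top. Qed.

Lemma hom_open_cover : fle (ftop _) (fsup (fun y => exists i, y = hom_open [set i])).
Proof.
rewrite -(frame_hom_top Fh); apply: fle_trans (frame_hom_le Fh (eta_down_cover k)) _.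
rewrite frame_hom_sup //; apply: fsup_le => _ [_ [i ->] ->].
by apply: fsup_ub; exists i.
Qed.

End HomOpen.

Section ProjOpen.
Local Open Scope ring_scope.
Variables (n : nat) (H : pba_axiom (ProjData n)).

(* The open of [F(Proj)] assigned to [p], read off in the context [{p, 1 - p}]. *)
Definition proj_open (p : proj n) : Fob F (ProjPBA H) := hom_open (binary_hom H p) [set ord0].

Section InResolution.
Variables (k : nat) (q : 'I_k -> proj n).
Hypothesis q_orth : forall i j, i != j -> val (q i) *m val (q j) = 0.
Hypothesis q_sum : \sum_i val (q i) = 1%:M.
Let hq := resolution_hom H q_orth q_sum.

(* Context independence: the context [{p, 1 - p}] of [p := q_S] factors
   through the resolution [q], so functoriality and naturality identify
   both opens. *)
Lemma proj_open_resolution S : proj_open (set_proj q S) = hom_open hq S.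
Proof.
have factor : comp_hom hq (split_hom S) = binary_hom H (set_proj q S).
  by apply: setPBA2_hom_ext; rewrite binary_hom0 -[X in _ = set_proj q X](split_hom0 S).
by rewrite /proj_open /hom_open -factor Fmap_comp eta_down_nat split_hom0.
Qed.

Lemma proj_open_cover : fle (ftop _) (fsup (fun y => exists i, y = proj_open (q i))).
Proof.
apply: fle_trans (hom_open_cover hq) _; apply: fsup_le => _ [i ->].
by apply: fsup_ub; exists i; rewrite -proj_open_resolution set_proj1.
Qed.

Lemma proj_open_disjoint i j : i != j ->
  fmeet (proj_open (q i)) (proj_open (q j)) = fbot _.
Proof.
move=> ij; rewrite -!(set_proj1 q_orth) !proj_open_resolution hom_open_meet -(hom_open0 hq).
congr hom_open; apply/setP => x; rewrite !inE; apply/negbTE; apply: contraNN ij.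
by case/andP => /eqP -> /eqP ->.
Qed.

End InResolution.

Lemma proj_open_orth (p p' : proj n) : val p *m val p' = 0 ->
  fmeet (proj_open p) (proj_open p') = fbot _.
Proof.
move=> pp'; pose pair (i : 'I_2) := if i == ord0 then p else p'.
have pair_orth i j : i != j -> val (pair i) *m val (pair j) = 0.
  by case: i j => -[|[|?]] ? [[|[|?]] ?] //= _; rewrite proj_orthC.
have := proj_open_disjoint (complete_family_orth pair_orth) (complete_family_sum pair_orth)
  (i := lift ord_max ord0) (j := lift ord_max (ord_max : 'I_2)).
by rewrite !complete_family_lift; apply.
Qed.

End ProjOpen.

Section KochenSpecker.
Local Open Scope ring_scope.
Variables (n : nat) (H : pba_axiom (ProjData n)).

Let coord_hom := resolution_hom H (@coord_proj_orth n) (coord_proj_sum n).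
Let popen := proj_open H.

Section Block.
Variable c : nat.
Hypothesis block_fits : (c + 3 <= n)%N.

Let ray_open (r : ray) := popen (ray_proj n c r).
Let block_compl := set_proj (@coord_proj n) (~: block_set n c).

Lemma ray_open_orth r t : ray_dot r t = zO -> fmeet (ray_open r) (ray_open t) = fbot _.
Proof.
by move=> rt; apply: proj_open_orth; apply: ray_proj_orth.
Qed.

Section Triad.
Variable t : seq nat.
Hypothesis t_triad : t \in peres_triads.

Let tri (a : 'I_3) := peres_ray (nth 0%N t a).

Lemma triad_spec :
  [/\ forall a : 'I_3, nth 0%N t a \in t,
      forall a b, a != b -> ray_dot (tri a) (tri b) = zO
    & forall a, zsC (ray_dot (tri a) (tri a)) != 0].
Proof.
case/and4P: (allP peres_triads_ok t t_triad) => /eqP t3 t_uniq /allP t_nz /allP t_orth.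
have t_in (a : 'I_3) : nth 0%N t a \in t by rewrite mem_nth ?t3.
split=> [|a b ab|a]; [exact: t_in | | exact/zsC_neq0/t_nz/t_in].
have /allP /(_ _ (t_in b)) := t_orth _ (t_in a).
have -> : (nth 0%N t a == nth 0%N t b) = false by apply/negbTE; rewrite nth_uniq ?t3.
by move=> /eqP.
Qed.

Let triad_proj (a : 'I_3) := ray_proj n c (tri a).

Lemma triad_proj_orth a b : a != b -> val (triad_proj a) *m val (triad_proj b) = 0.
Proof. by case: triad_spec => _ tri_orth _ ab; apply/ray_proj_orth/tri_orth. Qed.

(* The triad spans the block coordinates, so completing it by the
   complementary coordinate projection gives a resolution of the identity. *)
Lemma triad_compl : proj_compl (set_proj triad_proj setT) = block_compl.
Proof.
case: triad_spec => _ tri_orth tri_neq0.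
apply: val_inj; rewrite proj_complE (set_projE triad_proj_orth).
rewrite (set_projE (@coord_proj_orth n)) (proj_sumC (coord_proj_sum n)).
rewrite -block_embed_Tmul // -(sum_ray_projmx_triad n c tri_orth tri_neq0).
congr (_ - _); rewrite /proj_sum (eq_bigl xpredT) => [|a]; last by rewrite inE.
by apply: eq_bigr => a _; rewrite ray_projE.
Qed.

Lemma triad_cover : fle (ftop _)
  (fsup (fun y => y = popen block_compl \/ exists2 x, x \in t & y = ray_open (peres_ray x))).
Proof.
have := proj_open_cover H (complete_family_orth triad_proj_orth)
  (complete_family_sum triad_proj_orth).
move=> /fle_trans; apply; apply: fsup_le => _ [i ->]; apply: fsup_ub.
case: (unliftP ord_max i) => [a -> | ->]; last by rewrite complete_family_max triad_compl; left.
by rewrite complete_family_lift; right; exists (nth 0%N t a); case: triad_spec.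
Qed.

End Triad.

Lemma block_compl_top : fle (ftop _) (hom_open coord_hom (~: block_set n c)).
Proof.
rewrite -proj_open_resolution.
have := ks_refutes_sound triad_cover _ peres_refuted; apply=> x y /eqP.
exact: ray_open_orth.
Qed.

End Block.

Lemma proj_locale_trivial : (3 <= n)%N -> trivial_locale (Fob F (ProjPBA H)).
Proof.
move=> n3; apply: ftop_le_bot.
have tail_top m : fle (ftop _) (hom_open coord_hom [set j : 'I_n | (m <= j)%N]).
  elim: m => [|m IH].
    have -> : [set j : 'I_n | (0 <= j)%N] = setT by apply/setP => j; rewrite !inE.
    by rewrite hom_openT; apply: fle_refl.
  (* the block starting at [minn m (n - 3)] contains the coordinate [m] *)
  pose c := minn m (n - 3).
  have c_fits : (c + 3 <= n)%N by rewrite /c; lia.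
  apply: fle_trans (fle_meet IH (block_compl_top c_fits)) _.
  rewrite hom_open_meet; apply: hom_open_le; apply/subsetP => j.
  by rewrite /block_set !inE /c; move: (ltn_ord j); lia.
rewrite -(hom_open0 coord_hom); apply: fle_trans (tail_top n) _.
by apply: hom_open_le; apply/subsetP => j; rewrite !inE; move: (ltn_ord j); lia.
Qed.

End KochenSpecker.
End StoneFunctor.

Theorem mainTheorem9 (F : PBA_Loc_functor)
  (eta : forall A : PBA, (A -> Prop) -> @Fob F A) :
  (forall A : PBA, is_boolean A -> idl_frame_iso (eta A)) ->
  (forall (A B : PBA) (f : pba_hom A B), is_boolean A -> is_boolean B ->
     forall I : A -> Prop, is_ideal I ->
       @Fmap F A B f (eta A I) = eta B (idl_image f I)) ->
  forall n : nat, 3 <= n ->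
  forall H : pba_axiom (ProjData n),
    trivial_locale (@Fob F {| pdata := ProjData n; pba_ax := H |}).
Proof. by move=> eta_iso eta_nat n n3 H; apply: (proj_locale_trivial eta_iso eta_nat H n3). Qed.
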